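(* Let $h\in\mathcal{C}^\infty(\mathbb{R},\mathbb{R})$ and $\alpha\in\mathbb{R}$. Let $\phi,F\in\mathcal{C}^\infty(\mathbb{R}^3,\mathbb{R})$ be functions of $(t,x,y)$, and set $\psi=(\psi_1,\psi_2)=0$. Assume that \[ \cos\alpha\,\frac{\partial\phi}{\partial t}+\cos\alpha\,\frac{\partial\phi}{\partial x}+\sin\alpha\,\frac{\partial\phi}{\partial y}=\sin\alpha\,F,\qquad \sin\alpha\,\frac{\partial\phi}{\partial t}-\sin\alpha\,\frac{\partial\phi}{\partial x}+\cos\alpha\,\frac{\partial\phi}{\partial y}=-\cos\alpha\,F, \] and $F+h'(\phi)=0$ (these are the component form of the conditions $(\cos\alpha\,\tau_1+\sin\alpha\,\tau_2)\Phi=0$, $\psi=0$, $F+h'(\phi)=0$ for the superfield $\Phi=\phi+\theta^1\psi_1+\theta^2\psi_2+\theta^1\theta^2F$ on $\mathbb{R}^{3|2}$). Then $(\phi,\psi,F)$ solves the Euler--Lagrange system \[ \square\phi+h''(\phi)h'(\phi)+h'''(\phi)\psi_1\psi_2=0,\qquad \mathcal{D}\psi-h''(\phi)\psi=0,\qquad F+h'(\phi)=0; \] in particular $\square\phi+h''(\phi)h'(\phi)=0$.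
   Context: $\square:=\frac{\partial^2}{\partial t^2}-\frac{\partial^2}{\partial x^2}-\frac{\partial^2}{\partial y^2}$. On $\mathbb{R}^{3|2}$ with even coordinates $t,x,y$ and odd coordinates $\theta^1,\theta^2$, $\tau_1=\partial_{\theta^1}+\theta^1(\partial_t+\partial_x)+\theta^2\partial_y$ and $\tau_2=\partial_{\theta^2}+\theta^1\partial_y+\theta^2(\partial_t-\partial_x)$. With $\partial_{11}=\partial_t+\partial_x$, $\partial_{22}=\partial_t-\partial_x$, $\partial_{12}=\partial_{21}=\partial_y$, the operator $\mathcal{D}$ acts on pairs $\psi=(\psi_1,\psi_2)$ by $(\mathcal{D}\psi)_1=\partial_{12}\psi_1-\partial_{11}\psi_2$, $(\mathcal{D}\psi)_2=\partial_{22}\psi_1-\partial_{12}\psi_2$. The Euler--Lagrange system above is that of the action $\int d^3x\,d^2\theta\,(\tfrac14\epsilon^{ab}D_a\Phi D_b\Phi+\Phi^*h)$. *)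

From Stdlib Require Import Reals List.
From Coquelicot Require Import Coquelicot.
Open Scope R_scope.

Definition fn3 := R -> R -> R -> R.

(* Partial derivative in direction i: 0 = t, 1 = x, otherwise y. *)
Definition pd (i : nat) (f : fn3) : fn3 :=
  match i with
  | O => fun t x y => Derive (fun s => f s x y) t
  | 1%nat => fun t x y => Derive (fun s => f t s y) x
  | _ => fun t x y => Derive (fun s => f t x s) y
  end.

Definition ex_pd (i : nat) (f : fn3) (t x y : R) : Prop :=
  match i with
  | O => ex_derive (fun s => f s x y) t
  | 1%nat => ex_derive (fun s => f t s y) x
  | _ => ex_derive (fun s => f t x s) y
  end.

Definition iter_pd (l : list nat) (f : fn3) : fn3 := fold_right pd f l.

Definition continuous3 (g : fn3) : Prop :=
  forall t x y eps, 0 < eps -> exists delta, 0 < delta /\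
    forall t' x' y', Rabs (t' - t) < delta -> Rabs (x' - x) < delta ->
      Rabs (y' - y) < delta -> Rabs (g t' x' y' - g t x y) < eps.

Definition smooth3 (f : fn3) : Prop :=
  forall l : list nat,
    continuous3 (iter_pd l f) /\
    forall i t x y, ex_pd i (iter_pd l f) t x y.

Definition smooth1 (h : R -> R) : Prop :=
  forall (n : nat) (x : R), ex_derive_n h n x.

Definition box (f : fn3) : fn3 :=
  fun t x y => pd 0 (pd 0 f) t x y - pd 1 (pd 1 f) t x y - pd 2 (pd 2 f) t x y.

Definition d11 (f : fn3) : fn3 := fun t x y => pd 0 f t x y + pd 1 f t x y.
Definition d22 (f : fn3) : fn3 := fun t x y => pd 0 f t x y - pd 1 f t x y.
Definition d12 (f : fn3) : fn3 := fun t x y => pd 2 f t x y.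

Definition Dop1 (psi1 psi2 : fn3) : fn3 :=
  fun t x y => d12 psi1 t x y - d11 psi2 t x y.
Definition Dop2 (psi1 psi2 : fn3) : fn3 :=
  fun t x y => d22 psi1 t x y - d12 psi2 t x y.

From Stdlib Require Import Reals Lra List.
From Coquelicot Require Import Coquelicot.
Open Scope R_scope.

(* Write c = cos alpha, s = sin alpha and G = h'(phi).  Since psi = 0, the
   fermionic equations and the psi1 psi2 term are trivial, and F = -G, so
   everything reduces to the wave equation  box phi + h''(phi) h'(phi) = 0.
   Substituting F = -G, the two first-order hypotheses read
       c (phi_t + phi_x) + s phi_y = -s G,   s (phi_t - phi_x) + c phi_y = c G.
   Differentiating each of them in t, x and y (linearity of the partial
   derivative, plus the chain rule  d_k G = h''(phi) d_k phi) gives six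
   second-order relations.  Using the symmetry of mixed partials of the
   smooth function phi (Schwarz's theorem), a fixed linear combination of
   these six relations and the two original ones, weighted by c and s, is
   (s^2 + c^2) (box phi + h''(phi) G) = 0, which is the wave equation. *)

Lemma pd_ext k (f g : fn3) t x y :
  (forall t x y, f t x y = g t x y) -> pd k f t x y = pd k g t x y.
Proof.
  intros Hfg.
  destruct k as [|[|k]]; cbn [pd]; apply Derive_ext; intros; apply Hfg.
Qed.

Lemma pd_scal k a (f : fn3) t x y :
  pd k (fun t x y => a * f t x y) t x y = a * pd k f t x y.
Proof. destruct k as [|[|k]]; cbn [pd]; apply Derive_scal. Qed.

Lemma pd_lin k a b c (f g h : fn3) t x y :
  ex_pd k f t x y -> ex_pd k g t x y -> ex_pd k h t x y ->
  pd k (fun t x y => a * f t x y + b * g t x y + c * h t x y) t x y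
  = a * pd k f t x y + b * pd k g t x y + c * pd k h t x y.
Proof.
  assert (Hlin : forall (u v w : R -> R) z,
    ex_derive u z -> ex_derive v z -> ex_derive w z ->
    Derive (fun s => a * u s + b * v s + c * w s) z
    = a * Derive u z + b * Derive v z + c * Derive w z).
  { intros u v w z Hu Hv Hw.
    apply is_derive_unique.
    apply (is_derive_plus (fun s => a * u s + b * v s) (fun s => c * w s)).
    - apply (is_derive_plus (fun s => a * u s) (fun s => b * v s));
        apply is_derive_scal, Derive_correct; assumption.
    - apply is_derive_scal, Derive_correct; assumption. }
  destruct k as [|[|k]]; cbn [pd ex_pd]; apply Hlin.
Qed.

Lemma pd_linear_relation k a b c d (f0 f1 f2 g : fn3) t x y :
  (forall t x y, a * f0 t x y + b * f1 t x y + c * f2 t x y = d * g t x y) ->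
  ex_pd k f0 t x y -> ex_pd k f1 t x y -> ex_pd k f2 t x y ->
  a * pd k f0 t x y + b * pd k f1 t x y + c * pd k f2 t x y = d * pd k g t x y.
Proof.
  intros Hrel H0 H1 H2.
  rewrite <- pd_lin by assumption.
  rewrite (pd_ext k _ (fun t x y => d * g t x y)) by exact Hrel.
  apply pd_scal.
Qed.

Lemma pd_chain_Derive k (h : R -> R) (phi : fn3) t x y :
  smooth1 h -> ex_pd k phi t x y ->
  pd k (fun t x y => Derive h (phi t x y)) t x y
  = Derive_n h 2 (phi t x y) * pd k phi t x y.
Proof.
  intros Hh.
  assert (Hchain : forall u z, ex_derive u z ->
    Derive (fun s => Derive h (u s)) z = Derive_n h 2 (u z) * Derive u z).
  { intros u z Hu.
    apply is_derive_unique; rewrite Rmult_comm.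
    apply (is_derive_comp (Derive h) u); apply Derive_correct; [exact (Hh 2%nat (u z)) | exact Hu]. }
  destruct k as [|[|k]]; cbn [pd ex_pd]; intro Hk; exact (Hchain _ _ Hk).
Qed.

Lemma continuous3_slices (g : fn3) t x y :
  continuous3 g ->
  continuity_2d_pt (fun u v => g u v y) t x
  /\ continuity_2d_pt (fun u v => g u x v) t y
  /\ continuity_2d_pt (fun u v => g t u v) x y.
Proof.
  intros Hc.
  assert (Hzero : forall d z, 0 < d -> Rabs (z - z) < d)
    by (intros d z Hd; rewrite Rminus_diag, Rabs_R0; exact Hd).
  repeat split; intros eps;
    destruct (Hc t x y eps (cond_pos eps)) as [d [Hd Hball]];
    exists (mkposreal d Hd); simpl; intros u v Hu Hv; apply Hball; auto.
Qed.

Lemma schwarz_global (f : R -> R -> R) u0 v0 :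
  (forall u v,
     ex_derive (fun z => f z v) u /\ ex_derive (fun z => f u z) v
     /\ ex_derive (fun z => Derive (fun w => f z w) v) u
     /\ ex_derive (fun z => Derive (fun w => f w z) u) v) ->
  continuity_2d_pt (fun u v => Derive (fun z => Derive (fun w => f z w) v) u) u0 v0 ->
  continuity_2d_pt (fun u v => Derive (fun z => Derive (fun w => f w z) u) v) u0 v0 ->
  Derive (fun z => Derive (fun w => f z w) v0) u0
  = Derive (fun z => Derive (fun w => f w z) u0) v0.
Proof.
  intros Hex; apply Schwarz.
  exists (mkposreal 1 Rlt_0_1); intros u v _ _; apply Hex.
Qed.

Section SmoothFunction.
Variable phi : fn3.
Hypothesis phi_smooth : smooth3 phi.

Lemma smooth3_ex_pd i t x y : ex_pd i phi t x y.
Proof. exact (proj2 (phi_smooth nil) i t x y). Qed.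

Lemma smooth3_ex_pd2 i j t x y : ex_pd i (pd j phi) t x y.
Proof. exact (proj2 (phi_smooth (j :: nil)) i t x y). Qed.

Lemma smooth3_continuous2 i j : continuous3 (pd i (pd j phi)).
Proof. exact (proj1 (phi_smooth (i :: j :: nil))). Qed.

Lemma smooth3_ex_pd_pair i j t x y :
  ex_pd i phi t x y /\ ex_pd j phi t x y
  /\ ex_pd i (pd j phi) t x y /\ ex_pd j (pd i phi) t x y.
Proof.
  repeat split; auto using smooth3_ex_pd, smooth3_ex_pd2.
Qed.

Lemma pd_comm i j t x y : pd i (pd j phi) t x y = pd j (pd i phi) t x y.
Proof.
  assert (S01 : pd 0 (pd 1 phi) t x y = pd 1 (pd 0 phi) t x y).
  { apply (schwarz_global (fun u v => phi u v y) t x).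
    - intros u v; exact (smooth3_ex_pd_pair 0 1 u v y).
    - exact (proj1 (continuous3_slices _ t x y (smooth3_continuous2 0 1))).
    - exact (proj1 (continuous3_slices _ t x y (smooth3_continuous2 1 0))). }
  assert (S02 : pd 0 (pd 2 phi) t x y = pd 2 (pd 0 phi) t x y).
  { apply (schwarz_global (fun u v => phi u x v) t y).
    - intros u v; exact (smooth3_ex_pd_pair 0 2 u x v).
    - exact (proj1 (proj2 (continuous3_slices _ t x y (smooth3_continuous2 0 2)))).
    - exact (proj1 (proj2 (continuous3_slices _ t x y (smooth3_continuous2 2 0)))). }
  assert (S12 : pd 1 (pd 2 phi) t x y = pd 2 (pd 1 phi) t x y).
  { apply (schwarz_global (fun u v => phi t u v) x y).
    - intros u v; exact (smooth3_ex_pd_pair 1 2 t u v).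
    - exact (proj2 (proj2 (continuous3_slices _ t x y (smooth3_continuous2 1 2)))).
    - exact (proj2 (proj2 (continuous3_slices _ t x y (smooth3_continuous2 2 1)))). }
  destruct i as [|[|i]], j as [|[|j]]; cbn [pd] in *; auto.
Qed.

End SmoothFunction.

Lemma wave_elimination (c s G H p0 p1 p2 a00 a11 a22 a01 a02 a12 : R) :
  s * s + c * c = 1 ->
  c * p0 + c * p1 + s * p2 = - s * G ->
  s * p0 + - s * p1 + c * p2 = c * G ->
  c * a00 + c * a01 + s * a02 = - s * (H * p0) ->
  s * a00 + - s * a01 + c * a02 = c * (H * p0) ->
  c * a01 + c * a11 + s * a12 = - s * (H * p1) ->
  s * a01 + - s * a11 + c * a12 = c * (H * p1) ->
  c * a02 + c * a12 + s * a22 = - s * (H * p2) ->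
  s * a02 + - s * a12 + c * a22 = c * (H * p2) ->
  a00 - a11 - a22 + H * G = 0.
Proof.
  intros CS E1 E2 D10 D20 D11 D21 D12 D22.
  transitivity ((s * s + c * c) * (a00 - a11 - a22 + H * G)); [rewrite CS; ring|].
  transitivity (c * (c*a00 + c*a01 + s*a02 + s*(H*p0))
              + s * (s*a00 + -s*a01 + c*a02 - c*(H*p0))
              - c * (c*a01 + c*a11 + s*a12 + s*(H*p1))
              + s * (s*a01 + -s*a11 + c*a12 - c*(H*p1))
              - s * (c*a02 + c*a12 + s*a22 + s*(H*p2))
              - c * (s*a02 + -s*a12 + c*a22 - c*(H*p2))
              + H * (s * (c*p0 + c*p1 + s*p2 + s*G)
                     - c * (s*p0 + -s*p1 + c*p2 - c*G))); [ring|].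
  rewrite D10, D20, D11, D21, D12, D22, E1, E2; ring.
Qed.

Lemma wave_equation (h : R -> R) (alpha : R) (phi F : fn3) :
  smooth1 h -> smooth3 phi ->
  (forall t x y,
     cos alpha * pd 0 phi t x y + cos alpha * pd 1 phi t x y
       + sin alpha * pd 2 phi t x y = sin alpha * F t x y) ->
  (forall t x y,
     sin alpha * pd 0 phi t x y - sin alpha * pd 1 phi t x y
       + cos alpha * pd 2 phi t x y = - cos alpha * F t x y) ->
  (forall t x y, F t x y + Derive h (phi t x y) = 0) ->
  forall t x y,
     box phi t x y + Derive_n h 2 (phi t x y) * Derive h (phi t x y) = 0.
Proof.
  intros Hh Hphi E1 E2 EF t x y.
  set (c := cos alpha) in *; set (s := sin alpha) in *.
  set (G := fun t x y => Derive h (phi t x y)).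
  assert (R1 : forall t x y, c * pd 0 phi t x y + c * pd 1 phi t x y
                             + s * pd 2 phi t x y = - s * G t x y).
  { intros t' x' y'; unfold G; rewrite E1; specialize (EF t' x' y'); nra. }
  assert (R2 : forall t x y, s * pd 0 phi t x y + - s * pd 1 phi t x y
                             + c * pd 2 phi t x y = c * G t x y).
  { intros t' x' y'; unfold G.
    specialize (E2 t' x' y'); specialize (EF t' x' y'); nra. }
  assert (DR : forall k,
    c * pd k (pd 0 phi) t x y + c * pd k (pd 1 phi) t x y + s * pd k (pd 2 phi) t x y
      = - s * (Derive_n h 2 (phi t x y) * pd k phi t x y)
    /\ s * pd k (pd 0 phi) t x y + - s * pd k (pd 1 phi) t x y + c * pd k (pd 2 phi) t x y
      = c * (Derive_n h 2 (phi t x y) * pd k phi t x y)).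
  { intro k; rewrite <- (pd_chain_Derive k h phi t x y Hh (smooth3_ex_pd _ Hphi _ _ _ _)).
    split; apply pd_linear_relation;
      auto using smooth3_ex_pd2. }
  destruct (DR 0%nat) as [D10 D20]; destruct (DR 1%nat) as [D11 D21];
    destruct (DR 2%nat) as [D12 D22].
  rewrite (pd_comm _ Hphi 0 1), (pd_comm _ Hphi 0 2) in D10, D20.
  rewrite (pd_comm _ Hphi 1 2) in D11, D21.
  unfold box.
  apply (wave_elimination c s (G t x y)) with
    (p0 := pd 0 phi t x y) (p1 := pd 1 phi t x y) (p2 := pd 2 phi t x y)
    (a01 := pd 1 (pd 0 phi) t x y) (a02 := pd 2 (pd 0 phi) t x y)
    (a12 := pd 2 (pd 1 phi) t x y); auto.
  pose proof (sin2_cos2 alpha) as CS; unfold Rsqr in CS; exact CS.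
Qed.

Theorem mainTheorem1 (h : R -> R) (alpha : R) (phi F : fn3) :
  smooth1 h -> smooth3 phi -> smooth3 F ->
  let psi1 : fn3 := fun _ _ _ => 0 in
  let psi2 : fn3 := fun _ _ _ => 0 in
  (forall t x y,
     cos alpha * pd 0 phi t x y + cos alpha * pd 1 phi t x y
       + sin alpha * pd 2 phi t x y = sin alpha * F t x y) ->
  (forall t x y,
     sin alpha * pd 0 phi t x y - sin alpha * pd 1 phi t x y
       + cos alpha * pd 2 phi t x y = - cos alpha * F t x y) ->
  (forall t x y, F t x y + Derive h (phi t x y) = 0) ->
  (forall t x y,
     box phi t x y + Derive_n h 2 (phi t x y) * Derive h (phi t x y)
       + Derive_n h 3 (phi t x y) * psi1 t x y * psi2 t x y = 0
     /\ Dop1 psi1 psi2 t x y - Derive_n h 2 (phi t x y) * psi1 t x y = 0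
     /\ Dop2 psi1 psi2 t x y - Derive_n h 2 (phi t x y) * psi2 t x y = 0
     /\ F t x y + Derive h (phi t x y) = 0)
  /\ (forall t x y,
     box phi t x y + Derive_n h 2 (phi t x y) * Derive h (phi t x y) = 0).
Proof.
  intros Hh Hphi _ psi1 psi2 E1 E2 EF.
  pose proof (wave_equation h alpha phi F Hh Hphi E1 E2 EF) as Wave.
  split; [|exact Wave].
  intros t x y; subst psi1 psi2.
  unfold Dop1, Dop2, d11, d12, d22; cbn [pd]; rewrite !Derive_const.
  repeat split; [| ring | ring | apply EF].
  rewrite !Rmult_0_r, Rplus_0_r; apply Wave.
Qed.
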